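(* Let $n \ge 1$, let $N=\{1,\dots,n\}$ be a set of agents, $A=[0,1]$, and let $f$ be an ordered weighted average (OWA) mechanism with weights $w_1,\dots,w_n \in [0,1]$, $\sum_{j=1}^n w_j = 1$. Then $f$ is not obviously manipulable (NOM) if and only if either (i) $w_j = 1$ for some $j \in \{1,\dots,n\}$, or (ii) $w_1 = w_n = 0$.
   Context: A mechanism is a map $f: A^n \to A$ taking a profile $x=(x_i)_{i\in N}$ of reported locations (peaks) and returning a facility location. For $x_i$ the true location of agent $i$ and $y\in A$ the facility location, agent $i$'s utility is $u(x_i,y) = 1-|x_i-y|$. Write $f(x_i', x_{-i})$ for the output when agent $i$ reports $x_i'$ and the others report $x_{-i}\in A^{n-1}$. An OWA mechanism with weights $w_1,\dots,w_n$ returns $f(x)=\sum_{j=1}^n w_j x_{\pi(j)}$, where $\pi$ is a permutation of $N$ with $x_{\pi(1)}\le x_{\pi(2)}\le\dots\le x_{\pi(n)}$ (the $j$-th weight is applied to the $j$-th smallest report). $f$ satisfies NOM if for every $i\in N$ and all $x_i, x_i' \in A$: $\max_{x_{-i}\in A^{n-1}} u(x_i, f(x_i,x_{-i})) \ge \max_{x_{-i}\in A^{n-1}} u(x_i, f(x_i',x_{-i}))$ and $\min_{x_{-i}\in A^{n-1}} u(x_i, f(x_i,x_{-i})) \ge \min_{x_{-i}\in A^{n-1}} u(x_i, f(x_i',x_{-i}))$. *)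

From mathcomp Require Import all_boot all_order all_algebra.
From mathcomp Require Import boolp classical_sets reals.
Set Implicit Arguments. Unset Strict Implicit. Unset Printing Implicit Defensive.
Import Order.TTheory GRing.Theory Num.Theory.
Local Open Scope ring_scope.
Local Open Scope classical_set_scope.

Section Facility.
Variables (R : realType) (n : nat).

Definition inA (a : R) : Prop := 0 <= a <= 1.
Definition profile_in_A (x : 'I_n -> R) : Prop := forall j, inA (x j).

Definition util (xi y : R) : R := 1 - `|xi - y|.

Definition upd (x : 'I_n -> R) (i : 'I_n) (a : R) : 'I_n -> R :=
  fun j => if j == i then a else x j.

(* OWA mechanism: the j-th weight is applied to the j-th smallest report *)
Definition sorted_reports (x : 'I_n -> R) : seq R :=
  sort <=%R [seq x j | j <- enum 'I_n].
Definition owa (w : 'I_n -> R) (x : 'I_n -> R) : R :=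
  \sum_(j < n) w j * nth 0 (sorted_reports x) j.

(* best / worst utility of truthful agent with peak xi reporting a,
   over all reports x_{-i} in A^{n-1} of the others (the maxima/minima
   exist for OWA mechanisms; sup/inf coincide with max/min then) *)
Definition util_set (f : ('I_n -> R) -> R) (i : 'I_n) (xi a : R) : set R :=
  [set util xi (f (upd x i a)) | x in profile_in_A].

Definition NOM (f : ('I_n -> R) -> R) : Prop :=
  forall (i : 'I_n) (xi xi' : R), inA xi -> inA xi' ->
    sup (util_set f i xi xi) >= sup (util_set f i xi xi') /\
    inf (util_set f i xi xi) >= inf (util_set f i xi xi').

End Facility.

Definition first_agent (n : nat) (hn : (0 < n)%N) : 'I_n := Ordinal hn.
Lemma last_agent_proof (n : nat) (hn : (0 < n)%N) : (n.-1 < n)%N.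
Proof. by rewrite prednK. Qed.
Definition last_agent (n : nat) (hn : (0 < n)%N) : 'I_n :=
  Ordinal (last_agent_proof hn).

From mathcomp Require Import all_boot all_order all_algebra.
From mathcomp Require Import boolp classical_sets reals.
From mathcomp Require Import ring lra.
Import Order.TTheory GRing.Theory Num.Theory.
Local Open Scope ring_scope.
Set Implicit Arguments. Unset Strict Implicit. Unset Printing Implicit Defensive.

(* Write p = w_n and q = w_1.  When agent i reports a and the others range over
   A^(n-1), the outcome stays in [p a, q a + 1 - q], and both ends are attained
   (all others at 0, resp. at 1).  So the best-case utility is 1 for the truthful
   report, and the worst-case utility is 1 minus the distance from the peak to the
   farther end of that interval.  NOM thus says that the truthful report minimises
   this worst distance.  That holds when p, q are in {0, 1}; if 0 < p < 1, a peak
   just below 1 gains by reporting 1, and if 0 < q < 1, a peak just above 0 gains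
   by reporting 0.  Finally p, q in {0, 1} is condition (i) or (ii), because a unit
   weight forces all other weights to vanish. *)

Section Extrema.
Variable R : realType.
Implicit Types (E : set R) (x y lo hi : R).

Lemma inf_lbound_mem E x : E x -> lbound E x -> inf E = x.
Proof.
move=> Ex lbx; apply/eqP; rewrite eq_le (ge_inf _ Ex) ?(lb_le_inf _ lbx) //;
by exists x.
Qed.

Lemma sup_ubound_mem E x : E x -> ubound E x -> sup E = x.
Proof.
move=> Ex ubx; apply/eqP; rewrite eq_le (ub_le_sup _ Ex) ?(ge_sup _ ubx) //;
by exists x.
Qed.

Lemma dist_le_max_ends x lo y hi :
  lo <= y <= hi -> `|x - y| <= Num.max `|x - lo| `|x - hi|.
Proof.
case/andP=> loy yhi; rewrite le_max; have [xy|yx] := lerP x y; apply/orP.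
- by right; rewrite !(distrC x) !ger0_norm ?subr_ge0 ?lerB // (le_trans xy).
- by left; rewrite !gtr0_norm ?subr_gt0 ?lerB // (le_lt_trans loy).
Qed.
End Extrema.

Section SortedReports.
Variables (R : realType) (n : nat) (y : 'I_n -> R).
Local Notation s := (nth 0 (sorted_reports y)).

Lemma size_sorted_reports : size (sorted_reports y) = n.
Proof. by rewrite size_sort size_map size_enum_ord. Qed.

Lemma perm_sorted_reports : perm_eq (sorted_reports y) [seq y j | j <- enum 'I_n].
Proof. exact: permEl (perm_sort _ _). Qed.

Lemma sorted_reports_nth (j : nat) : (j < n)%N -> exists k, s j = y k.
Proof.
move=> jn; have : s j \in sorted_reports y by rewrite mem_nth ?size_sorted_reports.
by rewrite (perm_mem perm_sorted_reports) => /mapP[k _ ->]; exists k.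
Qed.

Lemma sorted_reports_index i : exists2 k, (k < n)%N & s k = y i.
Proof.
have : y i \in sorted_reports y.
  by rewrite (perm_mem perm_sorted_reports) map_f ?mem_enum.
by case/(nthP 0) => k; rewrite size_sorted_reports; exists k.
Qed.

Lemma sorted_reports_le_nth (j k : nat) : (j <= k)%N -> (k < n)%N -> s j <= s k.
Proof.
move=> jk kn; apply: (sorted_leq_nth le_trans lexx);
by rewrite ?inE ?size_sorted_reports ?(leq_ltn_trans jk kn) //; exact: sort_le_sorted.
Qed.

Lemma sorted_reports_first_le i : s 0 <= y i.
Proof. by have [k kn <-] := sorted_reports_index i; apply: sorted_reports_le_nth. Qed.

Lemma sorted_reports_le_last i : y i <= s n.-1.
Proof.
have [k kn <-] := sorted_reports_index i.
have n_gt0 : (0 < n)%N := leq_ltn_trans (leq0n k) kn.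
by apply: sorted_reports_le_nth; rewrite ?ltn_predL // -ltnS prednK.
Qed.

Lemma sum_sorted_reports : \sum_(j < n) s j = \sum_(j < n) y j.
Proof.
rewrite -(big_mkord xpredT s) -{1}size_sorted_reports -(big_nth 0 xpredT id).
by rewrite (perm_big _ perm_sorted_reports) big_map big_enum.
Qed.

Lemma sorted_reports_inA : profile_in_A y -> forall j : 'I_n, inA (s j).
Proof. by move=> yA j; have [k ->] := sorted_reports_nth (ltn_ord j). Qed.

End SortedReports.

Lemma inA0 {R : realType} : inA (0 : R).
Proof. by rewrite /inA lexx ler01. Qed.

Lemma inA1 {R : realType} : inA (1 : R).
Proof. by rewrite /inA lexx ler01. Qed.

Section WorstDistance.
Variables (R : realType) (p q : R).
Hypotheses (p01 : 0 <= p <= 1) (q01 : 0 <= q <= 1).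

Definition worst_dist (xi a : R) : R :=
  Num.max `|xi - p * a| `|xi - (q * a + (1 - q))|.

Lemma worst_dist_truthful xi :
  inA xi -> worst_dist xi xi = Num.max ((1 - p) * xi) ((1 - q) * (1 - xi)).
Proof.
case/andP: p01 q01 => p0 p1 /andP[q0 q1] /andP[xi0 xi1].
by rewrite /worst_dist (distrC xi (_ + _)) !ger0_norm; [congr Num.max; ring | nra | nra].
Qed.

Lemma worst_dist_truthful_le :
  p = 0 \/ p = 1 -> q = 0 \/ q = 1 ->
  forall xi a, inA xi -> inA a -> worst_dist xi xi <= worst_dist xi a.
Proof.
move=> p_01 q_01 xi a xiA aA.
rewrite worst_dist_truthful // ge_max /worst_dist !le_max.
case/andP: xiA => xi0 xi1; apply/andP; split; apply/orP.
- left; case: p_01 => ->; rewrite ?subrr ?mul0r ?normr_ge0 //.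
  by rewrite !subr0 mul1r ger0_norm.
- right; case: q_01 => ->; rewrite ?subrr ?mul0r ?normr_ge0 //.
  by rewrite !subr0 !mul1r add0r distrC ger0_norm // subr_ge0.
Qed.

Lemma worst_dist_report1_lt :
  0 < p < 1 ->
  worst_dist (1 - (1 - p) / 4) 1 < worst_dist (1 - (1 - p) / 4) (1 - (1 - p) / 4).
Proof.
move=> /andP[p_gt0 p_lt1].
rewrite worst_dist_truthful; last by apply/andP; split; lra.
rewrite /worst_dist lt_max !gt_max !ltr_norml; apply/orP; left.
by repeat (apply/andP; split); nra.
Qed.

Lemma worst_dist_report0_lt :
  0 < q < 1 -> worst_dist ((1 - q) / 4) 0 < worst_dist ((1 - q) / 4) ((1 - q) / 4).
Proof.
move=> /andP[q_gt0 q_lt1].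
rewrite worst_dist_truthful; last by apply/andP; split; lra.
rewrite /worst_dist lt_max !gt_max !ltr_norml; apply/orP; right.
by repeat (apply/andP; split); nra.
Qed.

Lemma truthful_min_worst_distE :
  (forall xi a, inA xi -> inA a -> worst_dist xi xi <= worst_dist xi a) <->
  (p = 0 \/ p = 1) /\ (q = 0 \/ q = 1).
Proof.
split=> [truthful_min|[]]; last exact: worst_dist_truthful_le.
have interior (c : R) : 0 <= c <= 1 -> c != 0 -> c != 1 -> 0 < c < 1.
  by case/andP=> c0 c1 cn0 cn1; rewrite !lt_neqAle eq_sym cn0 cn1 c0 c1.
case/andP: p01 q01 => p0 p1 /andP[q0 q1]; split.
- have [|p_neq0] := eqVneq p 0; first by left.
  have [|p_neq1] := eqVneq p 1; first by right.
  have xiA : inA (1 - (1 - p) / 4) by apply/andP; split; lra.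
  have := truthful_min _ _ xiA inA1.
  by rewrite leNgt worst_dist_report1_lt ?interior ?p01.
- have [|q_neq0] := eqVneq q 0; first by left.
  have [|q_neq1] := eqVneq q 1; first by right.
  have xiA : inA ((1 - q) / 4) by apply/andP; split; lra.
  have := truthful_min _ _ xiA inA0.
  by rewrite leNgt worst_dist_report0_lt ?interior ?q01.
Qed.
End WorstDistance.

Lemma upd_in_A (R : realType) n (y : 'I_n -> R) i a :
  profile_in_A y -> inA a -> profile_in_A (upd y i a).
Proof. by move=> yA aA j; rewrite /upd; case: ifP. Qed.

Lemma upd_same (R : realType) n (y : 'I_n -> R) i a : upd y i a i = a.
Proof. by rewrite /upd eqxx. Qed.

Lemma util_le1 (R : realType) (xi o : R) : util xi o <= 1.
Proof. by rewrite /util lerBlDr lerDl normr_ge0. Qed.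

Section OWA.
Variables (R : realType) (m : nat).
Local Notation n := m.+1.
Variable w : 'I_n -> R.
Hypotheses (w01 : forall j, 0 <= w j <= 1) (w_sum1 : \sum_(j < n) w j = 1).
Local Notation p := (w ord_max).
Local Notation q := (w ord0).
Local Notation s y := (nth 0 (sorted_reports y)).
Implicit Types (y : 'I_n -> R) (i : 'I_n) (a : R).

Lemma sum_weights_tail : \sum_(j < m) w (lift ord0 j) = 1 - q.
Proof. by rewrite -w_sum1 big_ord_recl addrC addKr. Qed.

Lemma owa_ge_last y i : profile_in_A y -> p * y i <= owa w y.
Proof.
move=> yA; rewrite /owa big_ord_recr /=.
have init_ge0 : 0 <= \sum_(j < m) w (widen_ord (leqnSn m) j) * s y j.
  apply: sumr_ge0 => j _; have /andP[w0 _] := w01 (widen_ord (leqnSn m) j).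
  by have /andP[s0 _] := sorted_reports_inA yA (widen_ord (leqnSn m) j); apply: mulr_ge0.
have /= le_last := sorted_reports_le_last y i; have /andP[p0 _] := w01 ord_max.
nra.
Qed.

Lemma owa_le_first y i : profile_in_A y -> owa w y <= q * y i + (1 - q).
Proof.
move=> yA; rewrite /owa big_ord_recl /= -sum_weights_tail.
have tail_le :
    \sum_(j < m) w (lift ord0 j) * s y (lift ord0 j) <= \sum_(j < m) w (lift ord0 j).
  apply: ler_sum => j _; have /andP[w0 w1] := w01 (lift ord0 j).
  have /andP[s0 s1] := sorted_reports_inA yA (lift ord0 j); nra.
have first_le := sorted_reports_first_le y i; have /andP[q0 _] := w01 ord0.
nra.
Qed.

Lemma owa_le_last_of_sum y i :
  profile_in_A y -> \sum_(j < n) y j <= y i -> owa w y <= p * y i.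
Proof.
move=> yA; rewrite -sum_sorted_reports /owa !big_ord_recr /= => sum_le.
have init_le : \sum_(j < m) w (widen_ord (leqnSn m) j) * s y j <= \sum_(j < m) s y j.
  apply: ler_sum => j _; have /andP[w0 w1] := w01 (widen_ord (leqnSn m) j).
  have /andP[s0 s1] := sorted_reports_inA yA (widen_ord (leqnSn m) j); nra.
have /= le_last := sorted_reports_le_last y i; have /andP[p0 p1] := w01 ord_max.
nra.
Qed.

Lemma owa_ge_first_of_sum y i :
  profile_in_A y -> \sum_(j < n) (1 - y j) <= 1 - y i -> q * y i + (1 - q) <= owa w y.
Proof.
move=> yA; rewrite sumrB -(sum_sorted_reports y) -sumrB /owa !big_ord_recl => sum_le.
have tail_ge : \sum_(j < m) w (lift ord0 j) - \sum_(j < m) (1 - s y (lift ord0 j))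
    <= \sum_(j < m) w (lift ord0 j) * s y (lift ord0 j).
  rewrite -sumrB; apply: ler_sum => j _; have /andP[w0 w1] := w01 (lift ord0 j).
  have /andP[s0 s1] := sorted_reports_inA yA (lift ord0 j); nra.
move: tail_ge; rewrite sum_weights_tail => tail_ge.
have first_le : s y (@ord0 m) <= y i := sorted_reports_first_le y i.
have /andP[q0 q1] := w01 ord0.
nra.
Qed.

Lemma owa_upd0 i a : inA a -> owa w (upd (fun=> 0) i a) = p * a.
Proof.
move=> aA; have yA := upd_in_A i (fun=> inA0) aA.
have y_i := upd_same (fun=> 0) i a.
apply/le_anti/andP; split.
- rewrite -{2}y_i; apply: owa_le_last_of_sum => //.
  by rewrite y_i /upd -big_mkcond /= big_pred1_eq.
- by rewrite -{1}y_i; apply: owa_ge_last.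
Qed.

Lemma owa_upd1 i a : inA a -> owa w (upd (fun=> 1) i a) = q * a + (1 - q).
Proof.
move=> aA; have yA := upd_in_A i (fun=> inA1) aA.
have y_i := upd_same (fun=> 1) i a.
apply/le_anti/andP; split.
- by rewrite -{2}y_i; apply: owa_le_first.
- rewrite -{1}y_i; apply: owa_ge_first_of_sum => //; rewrite y_i.
  rewrite (eq_bigr (fun j => if j == i then 1 - a else 0)) => [|j _].
    by rewrite -big_mkcond /= big_pred1_eq.
  by rewrite /upd; case: ifP; rewrite ?subrr.
Qed.

Lemma owa_const y c : (forall j, y j = c) -> owa w y = c.
Proof.
move=> yc; rewrite /owa (eq_bigr (fun j => w j * c)) => [|j _].
  by rewrite -mulr_suml w_sum1 mul1r.
by have [k ->] := sorted_reports_nth y (ltn_ord j); rewrite yc.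
Qed.

Local Notation S := (util_set (owa w)).

Lemma sup_util_set_le1 i xi a : sup (S i xi a) <= 1.
Proof.
apply: ge_sup => [|_ [y _ <-]]; last exact: util_le1.
by exists (util xi (owa w (upd (fun=> 0) i a))), (fun=> 0) => // j; exact: inA0.
Qed.

Lemma sup_util_set_truthful i xi : inA xi -> sup (S i xi xi) = 1.
Proof.
move=> xiA; apply: sup_ubound_mem => [|_ [y _ <-]]; last exact: util_le1.
exists (fun=> xi) => //; rewrite (@owa_const _ xi) => [|j]; last by rewrite /upd; case: ifP.
by rewrite /util subrr normr0 subr0.
Qed.

Lemma inf_util_set i xi a : inA a -> inf (S i xi a) = 1 - worst_dist p q xi a.
Proof.
move=> aA; apply: inf_lbound_mem.
- rewrite /worst_dist; have [le_hi|lt_lo] := leP `|xi - p * a| `|xi - (q * a + (1 - q))|.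
  + exists (fun=> 1) => [j|]; [exact: inA1 | by rewrite /util owa_upd1].
  + exists (fun=> 0) => [j|]; [exact: inA0 | by rewrite /util owa_upd0].
- move=> _ [y yA <-]; rewrite /util lerD2l lerN2; apply: dist_le_max_ends.
  have yA' := upd_in_A i yA aA.
  have lo := owa_ge_last i yA'; have hi := owa_le_first i yA'.
  by rewrite upd_same in lo hi; apply/andP.
Qed.

Lemma NOM_owaE :
  NOM (owa w) <-> forall xi a, inA xi -> inA a -> worst_dist p q xi xi <= worst_dist p q xi a.
Proof.
split=> [nom xi a xiA aA | truthful_min i xi a xiA aA].
- by have [_] := nom ord0 xi a xiA aA; rewrite !inf_util_set // lerD2l lerN2.
- rewrite sup_util_set_truthful // !inf_util_set // lerD2l lerN2.
  by split; [exact: sup_util_set_le1 | exact: truthful_min].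
Qed.

Lemma weight_eq1_others_eq0 j k : w j = 1 -> k != j -> w k = 0.
Proof.
move=> wj1 kj; have others0 : \sum_(l < n | l != j) w l = 0.
  by move: w_sum1; rewrite (bigD1 j) //= wj1 -[X in _ = X](addr0 1) => /addrI.
by apply: (psumr_eq0P _ others0) => // l _; case/andP: (w01 l).
Qed.

Lemma owa_weights_extremeE :
  (exists j, w j = 1) \/ (q = 0 /\ p = 0) <-> (p = 0 \/ p = 1) /\ (q = 0 \/ q = 1).
Proof.
split=> [[[j wj1]|[-> ->]]|[[p0|p1] [q0|q1]]].
- split.
  + have [->|] := eqVneq ord_max j; first by right.
    by left; apply: weight_eq1_others_eq0 wj1 _.
  + have [->|] := eqVneq ord0 j; first by right.
    by left; apply: weight_eq1_others_eq0 wj1 _.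
- by split; left.
- by right.
- by left; exists ord0.
- by left; exists ord_max.
- by left; exists ord_max.
Qed.

Lemma NOM_owa_iff : NOM (owa w) <-> (exists j, w j = 1) \/ (q = 0 /\ p = 0).
Proof.
apply: (iff_trans NOM_owaE).
apply: (iff_trans (truthful_min_worst_distE (w01 _) (w01 _))).
exact: iff_sym owa_weights_extremeE.
Qed.
End OWA.

Theorem theorem2 (R : realType) (n : nat) (hn : (0 < n)%N) (w : 'I_n -> R) :
  (forall j, 0 <= w j <= 1) ->
  \sum_(j < n) w j = 1 ->
  (NOM (owa w) <->
   ((exists j, w j = 1) \/ (w (first_agent hn) = 0 /\ w (last_agent hn) = 0))).
Proof.
case: n hn w => [//|m] hn w w01 w_sum1.
have -> : first_agent hn = ord0 by apply: val_inj.
have -> : last_agent hn = ord_max by apply: val_inj.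
exact: NOM_owa_iff.
Qed.
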